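(* Let $(\Gamma(-),X)$ be a connected graph of groups with fundamental group $\Gamma$, and suppose that $X$ has only finitely many vertices. Then there exist a graph of groups $(\Delta(-),Y)$ with $|V(Y)|<\infty$ and a spanning tree $T$ in $Y$ such that $\pi_1(\Delta(-),Y)\cong\Gamma$ and \[ \Delta(e)^e\neq\Delta(t(e))\quad\text{and}\quad \Delta(e)^{\bar e}\neq \Delta(o(e))\qquad\text{for all } e\in E(T). \] Moreover, if $(\Gamma(-),X)$ satisfies the finiteness condition $(F_1)$: $X$ is a finite graph, or the finiteness condition $(F_2)$: $\Gamma(v)$ is finite for every vertex $v\in V(X)$, then $(\Delta(-),Y)$ may be chosen so as to enjoy the same property.
   Context: Graphs are in the sense of Serre: a graph $X$ consists of a vertex set $V(X)$, a set $E(X)$ of directed edges with a fixed-point-free involution $e\mapsto\bar e$, and maps $o,t:E(X)\to V(X)$ (origin, terminus) with $t(\bar e)=o(e)$; loops and multiple edges are allowed. A graph of groups $(\Gamma(-),X)$ assigns to each vertex $v$ a group $\Gamma(v)$ and to each edge $e$ a group $\Gamma(e)$ with $\Gamma(\bar e)=\Gamma(e)$, together with monomorphisms $\Gamma(e)\to\Gamma(t(e))$, $a\mapsto a^e$; for $a\in\Gamma(e)$, $a^{\bar e}\in\Gamma(o(e))$ denotes the image under the monomorphism attached to $\bar e$. We write $\Gamma(e)^e$ and $\Gamma(e)^{\bar e}$ for the images of $\Gamma(e)$ in $\Gamma(t(e))$ and $\Gamma(o(e))$. $\pi_1(\Gamma(-),X)$ denotes the fundamental group of the graph of groups (Bass–Serre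 theory). *)

From Stdlib Require Import List.
Import ListNotations.
Set Implicit Arguments.

Record Group := {
  carrier :> Type;
  gmul : carrier -> carrier -> carrier;
  gone : carrier;
  ginv : carrier -> carrier;
  gmulA : forall x y z, gmul x (gmul y z) = gmul (gmul x y) z;
  gmul1g : forall x, gmul gone x = x;
  gmulg1 : forall x, gmul x gone = x;
  gmulVg : forall x, gmul (ginv x) x = gone;
  gmulgV : forall x, gmul x (ginv x) = gone }.
Arguments gmul {g}. Arguments gone {g}. Arguments ginv {g}.

Definition is_hom (G H : Group) (f : G -> H) : Prop :=
  forall x y, f (gmul x y) = gmul (f x) (f y).

Arguments is_hom {G H}.

Definition finite_type (A : Type) : Prop := exists l : list A, forall x, In x l.

Record graph := {
  V : Type;
  E : Type;
  ebar : E -> E;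
  org : E -> V;
  ter : E -> V;
  ebarK : forall e, ebar (ebar e) = e;
  ebar_neq : forall e, ebar e <> e;
  ter_ebar : forall e, ter (ebar e) = org e }.
Arguments ebar {g}. Arguments org {g}. Arguments ter {g}.

Fixpoint is_path (X : graph) (P : E X -> Prop) (u v : V X) (l : list (E X)) : Prop :=
  match l with
  | [] => u = v
  | e :: l' => P e /\ org e = u /\ @is_path X P (ter e) v l'
  end.

Fixpoint reduced (X : graph) (l : list (E X)) : Prop :=
  match l with
  | e1 :: ((e2 :: _) as l') => e2 <> ebar e1 /\ @reduced X l'
  | _ => True
  end.

Arguments is_path {X}.
Arguments reduced {X}.

Definition connected_by (X : graph) (P : E X -> Prop) : Prop :=
  forall u v : V X, exists l, is_path P u v l.

Arguments connected_by {X}.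

Definition connected (X : graph) : Prop := @connected_by X (fun _ : E X => True).

Definition spanning_tree {X : graph} (T : E X -> Prop) : Prop :=
  (forall e, T e -> T (ebar e)) /\
  connected_by T /\
  ~ (exists (v : V X) (l : list (E X)), l <> [] /\ is_path T v v l /\ reduced l).

Record gog (X : graph) := {
  vgrp : V X -> Group;
  egrp : E X -> Group;
  egrp_bar : forall e, egrp (ebar e) = egrp e;
  emono : forall e, egrp e -> vgrp (ter e);
  emono_hom : forall e, is_hom (emono e);
  emono_inj : forall e a b, emono e a = emono e b -> a = b }.

Definition up (X : graph) (D : gog X) (e : E X) (a : egrp D e) : vgrp D (ter e) :=
  emono D e a.

(* a^{ebar e} for a in Gamma(e); lands in Gamma(t(ebar e)) = Gamma(o(e)) *)
Definition upbar (X : graph) (D : gog X) (e : E X) (a : egrp D e)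
  : vgrp D (ter (ebar e)) :=
  emono D (ebar e) (eq_rect_r (fun G : Group => carrier G) a (egrp_bar D e)).

(* Data in H satisfying the relations of pi_1(D, X, T):
   homs psi_v : D(v) -> H, elements h_e with h_{ebar e} = h_e^{-1},
   h_e a^e h_e^{-1} = a^{ebar e}, and h_e = 1 for e in T. *)
Definition pi1_cone (X : graph) (D : gog X) (T : E X -> Prop) (H : Group)
  (psi : forall v : V X, vgrp D v -> H) (h : E X -> H) : Prop :=
  (forall v, is_hom (psi v)) /\
  (forall e, h (ebar e) = ginv (h e)) /\
  (forall e (a : egrp D e),
      gmul (gmul (h e) (psi (ter e) (up D e a))) (ginv (h e))
      = psi (ter (ebar e)) (upbar D e a)) /\
  (forall e, T e -> h e = gone).

Arguments pi1_cone {X} D T {H}.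
Arguments up {X}.
Arguments upbar {X}.

(* G is (isomorphic to) the fundamental group pi_1(D, X, T): G carries a
   universal family for the presentation of pi_1(D, X, T). *)
Definition is_pi1_tree (X : graph) (D : gog X) (T : E X -> Prop) (G : Group) : Prop :=
  exists (phi : forall v, vgrp D v -> G) (g : E X -> G),
    pi1_cone D T phi g /\
    forall (H : Group) (psi : forall v, vgrp D v -> H) (h : E X -> H),
      pi1_cone D T psi h ->
      (exists f : G -> H, is_hom f /\
          (forall v x, f (phi v x) = psi v x) /\ (forall e, f (g e) = h e)) /\
      (forall f1 f2 : G -> H, is_hom f1 -> is_hom f2 ->
          (forall v x, f1 (phi v x) = psi v x) -> (forall e, f1 (g e) = h e) ->
          (forall v x, f2 (phi v x) = psi v x) -> (forall e, f2 (g e) = h e) ->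
          forall y, f1 y = f2 y).

Definition is_pi1 (X : graph) (D : gog X) (G : Group) : Prop :=
  exists T, spanning_tree T /\ is_pi1_tree D T G.

Arguments is_pi1_tree {X}.
Arguments is_pi1 {X}.

Definition F1 {X : graph} (D : gog X) : Prop := finite_type (V X) /\ finite_type (E X).
Definition F2 {X : graph} (D : gog X) : Prop := forall v, finite_type (vgrp D v).

From Stdlib Require Import List Classical ClassicalEpsilon ProofIrrelevance Lia.
Import ListNotations.

(* Call a tree edge e bad when a^e ranges over all of Gamma(t(e)) (or the same
   holds for ebar e).  A bad edge of a spanning tree T is not a loop, so it can
   be contracted: delete t(e) together with e and ebar e, and reattach every
   other edge at t(e) to o(e), composing its monomorphism with the embedding
   Gamma(t(e)) = Gamma(e)^e -> Gamma(e)^(ebar e) <= Gamma(o(e)).  The image of T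
   is a spanning tree of the new graph of groups, and since h_e = 1 the relation
   a^e = a^(ebar e) identifies Gamma(t(e)) with a subgroup of Gamma(o(e)), so
   the presentations of pi_1 relative to T and to its image have the same
   universal property.  Contracting removes a vertex, so after finitely many steps no tree
   edge is bad; vertices, edges and vertex groups only ever get deleted, so (F1)
   and (F2) are preserved. *)

Lemma hom1 (G H : Group) (f : G -> H) : is_hom f -> f gone = gone.
Proof.
  intro Hf.
  assert (Hff : f gone = gmul (f gone) (f gone)) by (rewrite <- Hf, gmul1g; reflexivity).
  transitivity (gmul (ginv (f gone)) (gmul (f gone) (f gone))).
  - rewrite gmulA, gmulVg, gmul1g. reflexivity.
  - rewrite <- Hff. apply gmulVg.
Qed.

Lemma ginv1 (G : Group) : ginv (gone : G) = gone.
Proof. rewrite <- (gmul1g _ (ginv gone)). apply gmulgV. Qed.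

Lemma proj1_sig_inj (A : Type) (P : A -> Prop) (x y : {a | P a}) :
  proj1_sig x = proj1_sig y -> x = y.
Proof. apply eq_sig_hprop. intros; apply proof_irrelevance. Qed.

Definition card_le (A : Type) (n : nat) : Prop :=
  exists l : list A, (forall x, In x l) /\ length l <= n.

Lemma list_restrict_sig (A : Type) (P : A -> Prop) (l : list A) :
  exists l' : list {x | P x},
    (forall x p, In x l -> In (exist _ x p) l') /\
    length l' <= length l /\
    (forall z, In z l -> ~ P z -> length l' < length l).
Proof.
  induction l as [|a l [l' [Hin [Hle Hlt]]]].
  - exists []. simpl. repeat split; intros; [contradiction | lia | contradiction].
  - destruct (excluded_middle_informative (P a)) as [pa|npa].
    + exists (exist _ a pa :: l'). simpl. repeat split; [| lia |].
      * intros x p [->|Hx]; [left; f_equal; apply proof_irrelevance | right; auto].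
      * intros z [->|Hz] Hz'; [contradiction|]. specialize (Hlt z Hz Hz'). lia.
    + exists l'. simpl. repeat split; [| lia | intros; lia].
      intros x p [->|Hx]; [contradiction | auto].
Qed.

Lemma finite_type_sig (A : Type) (P : A -> Prop) :
  finite_type A -> finite_type {x | P x}.
Proof.
  intros [l Hl]. destruct (list_restrict_sig _ P l) as [l' [Hin _]].
  exists l'. intros [x p]. apply Hin, Hl.
Qed.

Lemma card_le_sig (A : Type) (P : A -> Prop) (n : nat) (z : A) :
  card_le A (S n) -> ~ P z -> card_le {x | P x} n.
Proof.
  intros [l [Hl Hlen]] Hz. destruct (list_restrict_sig _ P l) as [l' [Hin [_ Hlt]]].
  exists l'. split; [intros [x p]; apply Hin, Hl |].
  specialize (Hlt z (Hl z) Hz). lia.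
Qed.

Lemma card_le0 (A : Type) : card_le A 0 -> A -> False.
Proof. intros [[|x l] [Hl Hlen]] a; [exact (Hl a) | simpl in Hlen; lia]. Qed.

(** * Paths and spanning trees *)

Lemma is_path_app (X : graph) P (a b c : V X) l1 l2 :
  is_path P a b l1 -> is_path P b c l2 -> is_path P a c (l1 ++ l2).
Proof.
  revert a; induction l1 as [|e l1 IH]; simpl; intros a H1 H2.
  - subst; exact H2.
  - destruct H1 as [? [? ?]]; eauto.
Qed.

Lemma reduced_cons (X : graph) (e : E X) l :
  reduced (e :: l) <-> (match l with [] => True | f :: _ => f <> ebar e end) /\ reduced l.
Proof. destruct l; simpl; tauto. Qed.

Lemma spanning_tree_no_loop (X : graph) (T : E X -> Prop) e :
  spanning_tree T -> T e -> org e <> ter e.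
Proof.
  intros [_ [_ Hacyc]] Te Hloop. apply Hacyc.
  exists (org e), [e]. simpl. repeat split; congruence.
Qed.

Lemma cast_hom (G1 G2 : Group) (p : G1 = G2) (x y : G2) :
  eq_rect_r carrier (gmul x y) p = gmul (eq_rect_r carrier x p) (eq_rect_r carrier y p).
Proof. destruct p. reflexivity. Qed.

Lemma cast_inj (G1 G2 : Group) (p : G1 = G2) (x y : G2) :
  eq_rect_r carrier x p = eq_rect_r carrier y p -> x = y.
Proof. destruct p. auto. Qed.

Lemma cast_cancel (G1 G2 : Group) (p : G1 = G2) (x : G1) :
  eq_rect_r carrier (eq_rect G1 carrier x G2 p) p = x.
Proof. destruct p. reflexivity. Qed.

Lemma cast_sym (G1 G2 : Group) (p : G1 = G2) (x : G1) :
  eq_rect_r carrier x (eq_sym p) = eq_rect G1 carrier x G2 p.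
Proof. destruct p. reflexivity. Qed.

Lemma upbar_hom (X : graph) (D : gog X) e : is_hom (upbar D e).
Proof. intros x y. unfold upbar. rewrite cast_hom. apply emono_hom. Qed.

Lemma upbar_inj (X : graph) (D : gog X) e a b : upbar D e a = upbar D e b -> a = b.
Proof. unfold upbar. intro H. apply emono_inj in H. eapply cast_inj; eauto. Qed.

Definition agree_along (X : graph) (D : gog X) (K : Group)
  (psi : forall v, vgrp D v -> K) (e : E X) : Prop :=
  forall a, psi (ter e) (up D e a) = psi (ter (ebar e)) (upbar D e a).

Arguments agree_along {X} D {K}.

Lemma agree_along_ebar (X : graph) (D : gog X) (K : Group) (psi : forall v, vgrp D v -> K) e :
  agree_along D psi e -> agree_along D psi (ebar e).
Proof.
  intros Hpsi b.
  pose (a := eq_rect _ carrier b _ (egrp_bar D e)).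
  assert (Ha : upbar D e a = emono D (ebar e) b).
  { unfold upbar, a. rewrite cast_cancel. reflexivity. }
  unfold up at 1. rewrite <- Ha, <- Hpsi. unfold up, upbar.
  generalize (egrp_bar D (ebar e)) as q.
  generalize (ebarK X e). generalize (ebar (ebar e)). intros f Hf. subst f. intro q.
  replace q with (eq_sym (egrp_bar D e)) by apply proof_irrelevance.
  rewrite cast_sym. reflexivity.
Qed.

Lemma pi1_cone_agree_along {X : graph} {D : gog X} {T} {K : Group} {psi} {h : E X -> K} {e} :
  pi1_cone D T psi h -> T e -> agree_along D psi e.
Proof.
  intros [_ [_ [Hrel HT]]] Te a.
  rewrite <- Hrel, (HT e Te), ginv1, gmul1g, gmulg1. reflexivity.
Qed.

Definition proper_tree (X : graph) (D : gog X) (T : E X -> Prop) : Prop :=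
  forall e, T e ->
    (exists y : vgrp D (ter e), forall a : egrp D e, up D e a <> y) /\
    (exists y : vgrp D (ter (ebar e)), forall a : egrp D e, upbar D e a <> y).

Arguments proper_tree {X}.

Lemma not_proper_tree (X : graph) (D : gog X) (T : E X -> Prop) :
  (forall e, T e -> T (ebar e)) -> ~ proper_tree D T ->
  exists e, T e /\ forall b : vgrp D (ter e), exists a, up D e a = b.
Proof.
  intros Tsym Hbad. apply not_all_ex_not in Hbad as [e He].
  apply imply_to_and in He as [Te He]. apply not_and_or in He as [He|He].
  - exists e. split; [exact Te|]. intro b. apply NNPP. intro Hn. apply He.
    exists b. intros a Ha. apply Hn. exists a. exact Ha.
  - exists (ebar e). split; [apply Tsym, Te|]. intro b. apply NNPP. intro Hn.
    apply He. exists b. intros a Ha. apply Hn.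
    exists (eq_rect_r carrier a (egrp_bar D e)). exact Ha.
Qed.

(** * Contracting a bad edge *)

Section Contraction.

Variables (X : graph) (D : gog X) (e0 : E X).
Local Notation w := (ter e0).
Local Notation u := (ter (ebar e0)).
Hypothesis u_neq_w : u <> w.
Hypothesis up_e0_surj : forall b : vgrp D w, exists a, up D e0 a = b.

Definition up_e0_inv (b : vgrp D w) : egrp D e0 :=
  proj1_sig (constructive_indefinite_description _ (up_e0_surj b)).

Lemma up_e0_invK b : up D e0 (up_e0_inv b) = b.
Proof. unfold up_e0_inv. destruct constructive_indefinite_description; auto. Qed.

Lemma up_e0K a : up_e0_inv (up D e0 a) = a.
Proof. apply (emono_inj D e0). apply up_e0_invK. Qed.

Lemma up_e0_inv_hom : is_hom up_e0_inv.
Proof.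
  intros x y. apply (emono_inj D e0). rewrite emono_hom.
  fold (up D e0). rewrite !up_e0_invK. reflexivity.
Qed.

Lemma up_e0_inv_inj x y : up_e0_inv x = up_e0_inv y -> x = y.
Proof. intro H. rewrite <- (up_e0_invK x), <- (up_e0_invK y), H. reflexivity. Qed.

Definition theta (b : vgrp D w) : vgrp D u := upbar D e0 (up_e0_inv b).

Lemma theta_up a : theta (up D e0 a) = upbar D e0 a.
Proof. unfold theta. rewrite up_e0K. reflexivity. Qed.

Lemma theta_hom : is_hom theta.
Proof. intros x y. unfold theta. rewrite up_e0_inv_hom. apply upbar_hom. Qed.

Lemma theta_inj x y : theta x = theta y -> x = y.
Proof. intro H. apply up_e0_inv_inj, (upbar_inj _ D e0), H. Qed.

Lemma agree_along_theta (K : Group) (psi : forall v, vgrp D v -> K) b :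
  agree_along D psi e0 -> psi u (theta b) = psi w b.
Proof. intro Hpsi. unfold theta. rewrite <- Hpsi, up_e0_invK. reflexivity. Qed.

Definition V' := {v : V X | v <> w}.

Definition contr_data (v : V X) : {v' : V' & vgrp D v -> vgrp D (proj1_sig v')} :=
  match excluded_middle_informative (v = w) with
  | left H => existT _ (exist _ u u_neq_w)
                (fun x => theta (eq_rect v (fun z => vgrp D z) x w H))
  | right H => existT (fun v' : V' => vgrp D v -> vgrp D (proj1_sig v')) (exist _ v H) (fun x => x)
  end.

Definition contr v : V' := projT1 (contr_data v).
Definition contr_grp v : vgrp D v -> vgrp D (proj1_sig (contr v)) := projT2 (contr_data v).

Lemma contr_neq v (H : v <> w) : contr v = exist _ v H.
Proof.
  unfold contr, contr_data. destruct (excluded_middle_informative (v = w)); [contradiction|].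
  simpl. f_equal. apply proof_irrelevance.
Qed.

Lemma contr_w : contr w = exist _ u u_neq_w.
Proof.
  unfold contr, contr_data.
  destruct (excluded_middle_informative (w = w)); [reflexivity | contradiction].
Qed.

Lemma contr_grp_hom v : is_hom (contr_grp v).
Proof.
  unfold contr_grp, contr, contr_data.
  destruct (excluded_middle_informative (v = w)) as [->|H]; simpl.
  - apply theta_hom.
  - intros x y. reflexivity.
Qed.

Lemma contr_grp_inj v x y : contr_grp v x = contr_grp v y -> x = y.
Proof.
  unfold contr_grp, contr, contr_data.
  destruct (excluded_middle_informative (v = w)) as [->|H]; simpl.
  - apply theta_inj.
  - auto.
Qed.

Lemma agree_along_contr (K : Group) (psi : forall v, vgrp D v -> K) v x :
  agree_along D psi e0 -> psi (proj1_sig (contr v)) (contr_grp v x) = psi v x.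
Proof.
  intro Hpsi. unfold contr, contr_grp, contr_data.
  destruct (excluded_middle_informative (v = w)) as [->|H]; simpl.
  - apply agree_along_theta, Hpsi.
  - reflexivity.
Qed.

Lemma contr_family_neq (K : Group) (Psi : forall v' : V', vgrp D (proj1_sig v') -> K)
  v (H : v <> w) x : Psi (contr v) (contr_grp v x) = Psi (exist _ v H) x.
Proof.
  unfold contr, contr_grp, contr_data.
  destruct (excluded_middle_informative (v = w)) as [Hw|H']; [contradiction|].
  simpl. replace H' with H by apply proof_irrelevance. reflexivity.
Qed.

Lemma contr_family_w (K : Group) (Psi : forall v' : V', vgrp D (proj1_sig v') -> K) x :
  Psi (contr w) (contr_grp w x) = Psi (exist _ u u_neq_w) (theta x).
Proof.
  unfold contr, contr_grp, contr_data.
  destruct (excluded_middle_informative (w = w)) as [Hw|Hw]; [|contradiction].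
  simpl. replace Hw with (eq_refl w) by apply proof_irrelevance. reflexivity.
Qed.

Definition kept_edge (e : E X) : Prop := e <> e0 /\ e <> ebar e0.

Lemma kept_edge_ebar {e} : kept_edge e -> kept_edge (ebar e).
Proof.
  intros [h1 h2]; split; intro h.
  - apply h2. rewrite <- h, ebarK. reflexivity.
  - apply h1. rewrite <- (ebarK _ e), h, ebarK. reflexivity.
Qed.

Lemma not_kept_edge {e} : ~ kept_edge e -> e = e0 \/ e = ebar e0.
Proof. unfold kept_edge. tauto. Qed.

Definition E' := {e : E X | kept_edge e}.
Definition ebar' (e : E') : E' := exist _ (ebar (proj1_sig e)) (kept_edge_ebar (proj2_sig e)).
Definition org' (e : E') : V' := contr (org (proj1_sig e)).
Definition ter' (e : E') : V' := contr (ter (proj1_sig e)).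

Lemma ebarK' e : ebar' (ebar' e) = e.
Proof. apply proj1_sig_inj, ebarK. Qed.

Lemma ebar_neq' e : ebar' e <> e.
Proof. intro h. apply (@ebar_neq X (proj1_sig e)). exact (f_equal (@proj1_sig _ _) h). Qed.

Lemma ter_ebar' e : ter' (ebar' e) = org' e.
Proof. unfold ter', org'. simpl. rewrite ter_ebar. reflexivity. Qed.

Definition contracted_graph : graph :=
  @Build_graph V' E' ebar' org' ter' ebarK' ebar_neq' ter_ebar'.

Definition contracted_emono (e : E contracted_graph) (a : egrp D (proj1_sig e))
  : vgrp D (proj1_sig (ter e)) :=
  contr_grp _ (emono D _ a).

Lemma contracted_emono_hom e : is_hom (contracted_emono e).
Proof. intros x y. unfold contracted_emono. rewrite emono_hom. apply contr_grp_hom. Qed.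

Lemma contracted_emono_inj e a b : contracted_emono e a = contracted_emono e b -> a = b.
Proof. intro H. apply contr_grp_inj, (emono_inj D) in H. exact H. Qed.

Definition contracted_gog : gog contracted_graph :=
  @Build_gog contracted_graph (fun v => vgrp D (proj1_sig v)) (fun e => egrp D (proj1_sig e))
    (fun e => egrp_bar D (proj1_sig e)) contracted_emono contracted_emono_hom
    contracted_emono_inj.

Lemma contracted_card_le n : card_le (V X) (S n) -> card_le (V contracted_graph) n.
Proof. intro H. apply (card_le_sig _ _ _ w H). tauto. Qed.

Lemma contracted_F1 : F1 D -> F1 contracted_gog.
Proof. intros [HV HE]. split; apply finite_type_sig; assumption. Qed.

Lemma contracted_F2 : F2 D -> F2 contracted_gog.
Proof. intros HF [v Hv]. apply HF. Qed.

Variable T : E X -> Prop.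
Hypothesis T_e0 : T e0.
Hypothesis T_ebar : forall e, T e -> T (ebar e).

Definition contracted_tree (e : E contracted_graph) : Prop := T (proj1_sig e).

Lemma contr_removed_edge e : e = e0 \/ e = ebar e0 -> contr (org e) = contr (ter e).
Proof.
  assert (Hu : contr u = contr w) by (rewrite contr_w, (contr_neq _ u_neq_w); reflexivity).
  intros [-> | ->].
  - rewrite <- ter_ebar. exact Hu.
  - rewrite <- ter_ebar, ebarK. symmetry. exact Hu.
Qed.

Lemma contracted_path l a b :
  is_path T a b l -> exists l', @is_path contracted_graph contracted_tree (contr a) (contr b) l'.
Proof.
  revert a. induction l as [|e l IH]; simpl; intros a Hp.
  - subst. exists []. reflexivity.
  - destruct Hp as [Te [Ho Hp]]. destruct (IH _ Hp) as [l' Hl'].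
    destruct (excluded_middle_informative (kept_edge e)) as [ok|bad].
    + exists (exist _ e ok :: l'). simpl. repeat split; [exact Te | | exact Hl'].
      unfold org'. simpl. rewrite Ho. reflexivity.
    + exists l'. rewrite <- Ho, contr_removed_edge by (apply not_kept_edge, bad). exact Hl'.
Qed.

Lemma contr_eq_path a b : contr a = contr b ->
  exists c, is_path T a b c /\ (c = [] \/ c = [e0] \/ c = [ebar e0]).
Proof.
  intro H. destruct (classic (a = w)) as [Ha|Ha]; destruct (classic (b = w)) as [Hb|Hb].
  - exists []. simpl. split; [congruence | auto].
  - rewrite Ha, contr_w, (contr_neq _ Hb) in H. injection H as H.
    exists [ebar e0]. simpl. repeat split; auto.
    rewrite <- ter_ebar, ebarK. auto.
  - rewrite Hb, contr_w, (contr_neq _ Ha) in H. injection H as H.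
    exists [e0]. simpl. repeat split; auto. rewrite <- ter_ebar. auto.
  - rewrite (contr_neq _ Ha), (contr_neq _ Hb) in H. injection H as H.
    exists []. simpl. auto.
Qed.

(* The invariant on the first edge of the lift keeps the concatenation reduced
   when a connecting edge e0 or ebar e0 is inserted in front of it. *)
Lemma lift_reduced_path (l' : list E') : forall x' y',
  @is_path contracted_graph contracted_tree x' y' l' -> @reduced contracted_graph l' ->
  forall a b, contr a = x' -> contr b = y' ->
  exists l, is_path T a b l /\ reduced l /\ (l' <> [] -> l <> []) /\
    (forall f rest, l = f :: rest -> f = e0 \/ f = ebar e0 \/
       exists e2 rest', l' = e2 :: rest' /\ f = proj1_sig e2).
Proof.
  induction l' as [|e' l'' IH]; intros x' y' Hp Hr a b Ha Hb.
  - simpl in Hp. destruct (contr_eq_path a b) as [c [Hc Hcs]]; [congruence|].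
    exists c. split; [exact Hc|]. split; [destruct Hcs as [->|[->| ->]]; simpl; auto|].
    split; [congruence|]. intros f rest ->. destruct Hcs as [H|[H|H]]; inversion H; auto.
  - destruct Hp as [Te [Ho Hp]]. apply reduced_cons in Hr as [Hhd Hr].
    destruct e' as [e ok]. simpl in *.
    destruct (IH _ _ Hp Hr (ter e) b eq_refl Hb) as [lr [Hlr [Hrr [_ Hhr]]]].
    destruct (contr_eq_path a (org e)) as [c [Hc Hcs]]; [rewrite Ha, <- Ho; reflexivity|].
    assert (He : reduced (e :: lr)).
    { apply reduced_cons. split; [|exact Hrr]. destruct lr as [|f rest]; [exact I|].
      destruct (Hhr f rest eq_refl) as [Hf|[Hf|[e2 [rest' [He2 Hf]]]]]; subst f; intro Hb'.
      - apply (proj2 ok). rewrite Hb', ebarK. reflexivity.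
      - apply (proj1 ok). rewrite <- (ebarK _ e), <- Hb', ebarK. reflexivity.
      - subst l''. apply Hhd. apply proj1_sig_inj. exact Hb'. }
    exists (c ++ e :: lr). split; [|split; [|split]].
    + eapply is_path_app; [exact Hc|]. simpl. auto.
    + destruct Hcs as [->|[->| ->]]; simpl; auto.
      * split; [exact (proj2 ok) | exact He].
      * split; [rewrite ebarK; exact (proj1 ok) | exact He].
    + intros _. destruct c; discriminate.
    + intros f rest Hfr.
      destruct Hcs as [->|[->| ->]]; simpl in Hfr; injection Hfr as Hf _; subst f; auto.
      right; right. exists (exist _ e ok), l''. auto.
Qed.

Lemma contracted_spanning_tree : spanning_tree T -> spanning_tree contracted_tree.
Proof.
  intros [Tsym [Tconn Tacyc]]. split; [|split].
  - intros e He. apply Tsym, He.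
  - intros [a Ha] [b Hb]. destruct (Tconn a b) as [l Hl].
    destruct (contracted_path _ _ _ Hl) as [l' Hl'].
    rewrite (contr_neq _ Ha), (contr_neq _ Hb) in Hl'. exists l'. exact Hl'.
  - intros [[a Ha] [l' [Hne [Hp Hr]]]]. apply Tacyc.
    destruct (lift_reduced_path l' _ _ Hp Hr a a (contr_neq _ Ha) (contr_neq _ Ha))
      as [l [H1 [H2 [H3 _]]]].
    exists a, l. auto.
Qed.

Lemma restrict_cone {K : Group} {phi : forall v, vgrp D v -> K} {g : E X -> K} :
  pi1_cone D T phi g ->
  pi1_cone contracted_gog contracted_tree
    (fun v => phi (proj1_sig v)) (fun e => g (proj1_sig e)).
Proof.
  intro Hcone. pose proof (pi1_cone_agree_along Hcone T_e0) as Hagree.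
  destruct Hcone as [Hhom [Hinv [Hrel HT]]].
  split; [|split; [|split]].
  - intro v. apply Hhom.
  - intro e. apply Hinv.
  - intros [e ok] a.
    change (gmul (gmul (g e) (phi (proj1_sig (contr (ter e))) (contr_grp (ter e) (up D e a))))
              (ginv (g e))
            = phi (proj1_sig (contr (ter (ebar e)))) (contr_grp (ter (ebar e)) (upbar D e a))).
    rewrite !(agree_along_contr _ phi _ _ Hagree). apply Hrel.
  - intros e He. apply HT, He.
Qed.

Definition extend_vertices {K : Group} (Psi : forall v : V', vgrp D (proj1_sig v) -> K)
  (v : V X) (x : vgrp D v) : K :=
  Psi (contr v) (contr_grp v x).

Definition extend_edges {K : Group} (h : E' -> K) (e : E X) : K :=
  match excluded_middle_informative (kept_edge e) with
  | left p => h (exist _ e p)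
  | right _ => gone
  end.

Lemma extend_edges_kept {K : Group} (h : E' -> K) {e} (ok : kept_edge e) :
  extend_edges h e = h (exist _ e ok).
Proof.
  unfold extend_edges. destruct (excluded_middle_informative _) as [p|bad]; [|contradiction].
  f_equal. apply proj1_sig_inj. reflexivity.
Qed.

Lemma extend_edges_removed {K : Group} (h : E' -> K) {e} :
  ~ kept_edge e -> extend_edges h e = gone.
Proof.
  intro bad. unfold extend_edges.
  destruct (excluded_middle_informative _) as [p|_]; [contradiction | reflexivity].
Qed.

Lemma extend_edges_ebar {K : Group} (h : E' -> K) :
  (forall e, h (ebar' e) = ginv (h e)) ->
  forall e, extend_edges h (ebar e) = ginv (extend_edges h e).
Proof.
  intros Hinv e. destruct (classic (kept_edge e)) as [ok|bad].
  - rewrite (extend_edges_kept h ok), (extend_edges_kept h (kept_edge_ebar ok)).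
    exact (Hinv (exist _ e ok)).
  - rewrite !extend_edges_removed, ginv1; [reflexivity | exact bad |].
    intro ok. apply bad. rewrite <- (ebarK _ e). apply kept_edge_ebar, ok.
Qed.

Lemma extend_cone {K : Group} {Psi : forall v : V', vgrp D (proj1_sig v) -> K} {h : E' -> K} :
  pi1_cone contracted_gog contracted_tree Psi h ->
  pi1_cone D T (extend_vertices Psi) (extend_edges h).
Proof.
  intros [Phom [Pinv [Prel PT]]].
  assert (Hagree : agree_along D (extend_vertices Psi) e0).
  { intro a. unfold extend_vertices.
    rewrite contr_family_w, theta_up, (contr_family_neq _ _ _ u_neq_w). reflexivity. }
  split; [|split; [|split]].
  - intros v x y. unfold extend_vertices. rewrite contr_grp_hom. apply Phom.
  - apply extend_edges_ebar, Pinv.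
  - intros e a. destruct (classic (kept_edge e)) as [ok|bad].
    + rewrite (extend_edges_kept h ok). exact (Prel (exist _ e ok) a).
    + rewrite extend_edges_removed, ginv1, gmul1g, gmulg1 by exact bad.
      destruct (not_kept_edge bad) as [-> | ->]; [|apply agree_along_ebar]; apply Hagree.
  - intros e He. destruct (classic (kept_edge e)) as [ok|bad].
    + rewrite (extend_edges_kept h ok). apply (PT (exist _ e ok)), He.
    + apply extend_edges_removed, bad.
Qed.

Lemma hom_restrict_extend {G K : Group} {phi g} {f : G -> K}
  {Psi : forall v : V', vgrp D (proj1_sig v) -> K} {h : E' -> K} :
  pi1_cone D T phi g -> is_hom f ->
  (forall v x, f (phi (proj1_sig v) x) = Psi v x) -> (forall e, f (g (proj1_sig e)) = h e) ->
  (forall v x, f (phi v x) = extend_vertices Psi v x) /\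
  (forall e, f (g e) = extend_edges h e).
Proof.
  intros Hcone Hf Hv He. split.
  - intros v x. unfold extend_vertices.
    rewrite <- Hv, (agree_along_contr _ phi); [reflexivity|].
    exact (pi1_cone_agree_along Hcone T_e0).
  - intro e. destruct (classic (kept_edge e)) as [ok|bad].
    + rewrite (extend_edges_kept h ok). exact (He (exist _ e ok)).
    + destruct Hcone as [_ [_ [_ HT]]]. rewrite (extend_edges_removed h bad), HT.
      * apply hom1, Hf.
      * destruct (not_kept_edge bad) as [-> | ->]; auto.
Qed.

Lemma contracted_pi1_tree (G : Group) :
  is_pi1_tree D T G -> is_pi1_tree contracted_gog contracted_tree G.
Proof.
  intros [phi [g [Hcone Huniv]]].
  exists (fun v x => phi (proj1_sig v) x), (fun e => g (proj1_sig e)).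
  split; [exact (restrict_cone Hcone)|].
  intros K Psi h HPsi.
  destruct (Huniv K _ _ (extend_cone HPsi)) as [[f [Hf [Hfv Hfe]]] Huniq].
  split.
  - exists f. split; [exact Hf | split].
    + intros [v Hv] x. simpl. rewrite Hfv. apply contr_family_neq.
    + intros [e ok]. simpl. rewrite Hfe. apply extend_edges_kept.
  - intros f1 f2 Hf1 Hf2 Hf1v Hf1e Hf2v Hf2e.
    destruct (hom_restrict_extend Hcone Hf1 Hf1v Hf1e).
    destruct (hom_restrict_extend Hcone Hf2 Hf2v Hf2e).
    eapply Huniq; eauto.
Qed.

End Contraction.

Lemma proper_tree_reduction n : forall (X : graph) (D : gog X) (G : Group),
  card_le (V X) n -> is_pi1 D G ->
  exists (Y : graph) (Dl : gog Y) (T : E Y -> Prop),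
    finite_type (V Y) /\ spanning_tree T /\ is_pi1 Dl G /\ proper_tree Dl T /\
    (F1 D -> F1 Dl) /\ (F2 D -> F2 Dl).
Proof.
  induction n as [|n IH]; intros X D G Hcard [T [Tspan Tpi1]].
  all: destruct (classic (proper_tree D T)) as [Tproper|Timproper].
  1,3: destruct Hcard as [l [Hl _]];
       exists X, D, T; split; [exists l; exact Hl|];
       split; [exact Tspan|]; split; [exists T; auto|]; auto.
  all: destruct (not_proper_tree _ D T (proj1 Tspan) Timproper) as [e0 [T_e0 Hsurj]].
  - destruct (card_le0 _ Hcard (ter e0)).
  - assert (Hloop : ter (ebar e0) <> ter e0).
    { rewrite ter_ebar. exact (spanning_tree_no_loop _ _ _ Tspan T_e0). }
    destruct (IH _ (contracted_gog _ _ _ Hloop Hsurj) G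
                (contracted_card_le _ _ _ Hloop Hsurj _ Hcard))
      as [Y [Dl [T' [HV [HT' [Hpi1 [Hproper [HF1 HF2]]]]]]]].
    + exists (contracted_tree _ _ _ Hloop Hsurj T). split.
      * exact (contracted_spanning_tree _ _ _ Hloop Hsurj _ T_e0 (proj1 Tspan) Tspan).
      * exact (contracted_pi1_tree _ _ _ Hloop Hsurj _ T_e0 (proj1 Tspan) _ Tpi1).
    + exists Y, Dl, T'. do 4 (split; [assumption|]).
      split; intro HF; [apply HF1, contracted_F1 | apply HF2, contracted_F2]; exact HF.
Qed.

Theorem lemma3p1 (X : graph) (D : gog X) (G : Group)
  (Xconn : connected X) (Xfin : finite_type (V X)) (HG : is_pi1 D G) :
  exists (Y : graph) (Dl : gog Y) (T : E Y -> Prop),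
    finite_type (V Y) /\ spanning_tree T /\ is_pi1 Dl G /\
    (forall e, T e ->
       (exists y : vgrp Dl (ter e), forall a : egrp Dl e, up Dl e a <> y) /\
       (exists y : vgrp Dl (ter (ebar e)), forall a : egrp Dl e, upbar Dl e a <> y)) /\
    (F1 D -> F1 Dl) /\ (F2 D -> F2 Dl).
Proof.
  destruct Xfin as [l Hl].
  exact (proper_tree_reduction (length l) X D G (ex_intro _ l (conj Hl (le_n _))) HG).
Qed.
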